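(* Define words $w_{[n]}$ over $\{1,-1\}$ of length $3^n$ by $w_{[0]}=1$ and $w_{[n+1]}=w_{[n]}\,w_{[n]}\,w_{[n]}'$, where $w_{[n]}'$ is obtained from $w_{[n]}$ by changing its middle symbol (the symbol in position $(3^n+1)/2$, which is $1$) from $1$ to $-1$. Then $w_{[n]}$ is a prefix of $w_{[n+1]}$ for all $n$, so the limit $\lim_{n\to\infty}w_{[n]}$ is a well-defined infinite sequence, and it equals $w_\alpha$.
   Context: $w_\alpha=\lim_{n\to\infty}\phi^n(1)$, where $\phi$ is the monoid endomorphism of $\{1,-1\}^*$ determined by $\phi(1)=1\,1\,(-1)$ and $\phi(-1)=1\,(-1)\,(-1)$. *)

From mathcomp Require Import all_boot all_order all_algebra.
Set Implicit Arguments. Unset Strict Implicit. Unset Printing Implicit Defensive.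
Import GRing.Theory.
Local Open Scope ring_scope.

(* Image of a single symbol under phi: phi(1) = 1 1 (-1), phi(-1) = 1 (-1) (-1).
   (Only ever applied to symbols in {1,-1}.) *)
Definition phi_sym (x : int) : seq int :=
  if x == 1 then [:: 1; 1; -1] else [:: 1; -1; -1].

Definition phi (s : seq int) : seq int := flatten (map phi_sym s).

Definition phi_iter (n : nat) : seq int := iter n phi [:: 1].

(* w_[n]: w_[0] = 1, w_[n+1] = w_[n] w_[n] w_[n]', where w_[n]' changes the
   symbol at (1-based) position (3^n+1)/2, i.e. 0-based index (3^n-1)/2,
   to -1. *)
Fixpoint w_ (n : nat) : seq int :=
  match n with
  | 0 => [:: 1]
  | m.+1 => w_ m ++ w_ m ++ set_nth 0 (w_ m) (((3 ^ m).-1)./2)%N (-1)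
  end.

Definition word_limit (u : nat -> seq int) (w : nat -> int) : Prop :=
  forall k : nat, exists N : nat, forall n : nat, (N <= n)%N ->
    (k < size (u n))%N /\ nth 0 (u n) k = w k.

(* Since phi is a monoid morphism, phi^(n+1)(1) = phi^n(1) phi^n(1) phi^n(-1)
   and phi^(n+1)(-1) = phi^n(1) phi^n(-1) phi^n(-1).  By induction on n,
   phi^n(-1) is phi^n(1) with its middle symbol (a 1) changed to -1: the middle
   of a word of length 3^(n+1) is the middle of its central block of length 3^n.
   Hence w_[n] = phi^n(1), and a chain of words, each a prefix of the next and
   of unbounded length, converges to the sequence read off its diagonal. *)

From mathcomp Require Import all_boot all_order all_algebra.
From mathcomp Require Import zify.
Local Open Scope ring_scope.

Lemma set_nth_catr (T : Type) (x0 : T) (s t : seq T) i x :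
  set_nth x0 (s ++ t) (size s + i) x = s ++ set_nth x0 t i x.
Proof. by elim: s => //= a s ->. Qed.

Lemma set_nth_catl (T : Type) (x0 : T) (s t : seq T) i x : (i < size s)%N ->
  set_nth x0 (s ++ t) i x = set_nth x0 s i x ++ t.
Proof. by elim: s i => [|a s IH] [|i] //= lt_i_s; rewrite IH. Qed.

Lemma phi_cat s t : phi (s ++ t) = phi s ++ phi t.
Proof. by rewrite /phi map_cat flatten_cat. Qed.

Lemma iter_phi_cat n s t : iter n phi (s ++ t) = iter n phi s ++ iter n phi t.
Proof. by elim: n => //= n ->; rewrite phi_cat. Qed.

Definition phi_iterN (n : nat) : seq int := iter n phi [:: -1].

Lemma phi_iterS n : phi_iter n.+1 = phi_iter n ++ phi_iter n ++ phi_iterN n.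
Proof. by rewrite /phi_iter iterSr -!iter_phi_cat. Qed.

Lemma phi_iterNS n : phi_iterN n.+1 = phi_iter n ++ phi_iterN n ++ phi_iterN n.
Proof. by rewrite /phi_iterN iterSr -!iter_phi_cat. Qed.

Definition mid (n : nat) : nat := ((3 ^ n).-1)./2.

Lemma mid_lt n : (mid n < 3 ^ n)%N.
Proof. rewrite /mid -divn2; have := expn_gt0 3 n; lia. Qed.

Lemma midS n : mid n.+1 = (3 ^ n + mid n)%N.
Proof. rewrite /mid -!divn2 expnS; have := expn_gt0 3 n; lia. Qed.

Lemma phi_iter_structure n :
  [/\ size (phi_iter n) = (3 ^ n)%N, size (phi_iterN n) = (3 ^ n)%N,
      nth 0 (phi_iter n) (mid n) = 1
    & phi_iterN n = set_nth 0 (phi_iter n) (mid n) (-1)].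
Proof.
elim: n => [|n [sizeA sizeB midA defB]] //.
rewrite phi_iterS phi_iterNS !size_cat sizeA sizeB expnS midS; split.
- lia.
- lia.
- by rewrite nth_cat sizeA ltnNge leq_addr addKn nth_cat sizeA mid_lt.
- by rewrite -{1}sizeA set_nth_catr set_nth_catl ?sizeA ?mid_lt // -defB.
Qed.

Lemma w_phi_iter n : w_ n = phi_iter n.
Proof.
elim: n => // n IH.
by rewrite phi_iterS /= IH; case: (phi_iter_structure n) => _ _ _ ->.
Qed.

Lemma prefix_chain_limit (u : nat -> seq int) :
  (forall n, prefix (u n) (u n.+1)) -> (forall k, (k < size (u k))%N) ->
  word_limit u (fun k => nth 0 (u k) k).
Proof.
move=> prefix_uS lt_k_uk k; exists k => n le_kn.
have /prefixP [t ->] : prefix (u k) (u n).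
  elim: n le_kn => [|n IH]; first by rewrite leqn0 => /eqP ->; apply: prefix_refl.
  rewrite leq_eqVlt => /orP [/eqP -> | /IH]; first exact: prefix_refl.
  by move/prefix_trans; apply.
by rewrite size_cat nth_cat lt_k_uk (leq_trans (lt_k_uk k) (leq_addr _ _)).
Qed.

Lemma eq_word_limit (u v : nat -> seq int) w :
  u =1 v -> word_limit u w -> word_limit v w.
Proof.
move=> eq_uv lim_u k; have [N lim_uN] := lim_u k.
by exists N => n /lim_uN; rewrite eq_uv.
Qed.

Theorem mainTheorem3 :
  (forall n : nat, size (w_ n) = (3 ^ n)%N) /\
  (forall n : nat, nth 0 (w_ n) (((3 ^ n).-1)./2)%N = 1) /\
  (forall n : nat, prefix (w_ n) (w_ n.+1)) /\
  (exists w_alpha : nat -> int,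
      word_limit phi_iter w_alpha /\ word_limit w_ w_alpha).
Proof.
have size_w n : size (w_ n) = (3 ^ n)%N.
  by rewrite w_phi_iter; case: (phi_iter_structure n).
have prefix_wS n : prefix (w_ n) (w_ n.+1) by rewrite /= prefix_prefix.
have lt_k_wk k : (k < size (w_ k))%N by rewrite size_w ltn_expl.
have mid_w n : nth 0 (w_ n) (mid n) = 1.
  by rewrite w_phi_iter; case: (phi_iter_structure n).
have lim_w := prefix_chain_limit w_ prefix_wS lt_k_wk.
do 3!split=> //; exists (fun k => nth 0 (w_ k) k); split=> //.
exact: eq_word_limit w_phi_iter lim_w.
Qed.
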